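(* Consider problem (P) in the setting $\mathbb Y=\mathbb R^m$, $m=m_1+m_2$, $C=\mathbb R^{m_1}_-\times\{0\}^{m_2}$ (no assumption on $D$). Let $\bar w\in\mathbb W$ be a feasible point of (P) at which RCPLD holds. Then $\bar w$ is AM-regular.
   Context: Standing setting: $\mathbb W,\mathbb Y$ are Euclidean spaces; problem (P) is $\min_w f(w)$ s.t. $G(w)\in C$, $w\in D$, where $f\colon\mathbb W\to\mathbb R$ and $G\colon\mathbb W\to\mathbb Y$ are continuously differentiable, $C\subset\mathbb Y$ is nonempty, closed, convex, and $D\subset\mathbb W$ is nonempty and closed. $G'(w)^*$ denotes the adjoint of the derivative. For a closed set $D$, $\Pi_D(x)$ is the (possibly multivalued) Euclidean projection onto $D$, and the limiting normal cone at $\bar w\in D$ is $\mathcal N^{\lim}_D(\bar w):=\limsup_{w\to\bar w}\operatorname{cone}(w-\Pi_D(w))$ (outer/Painlevé–Kuratowski limit), with $\mathcal N^{\lim}_D(w)=\varnothing$ for $w\notin D$. $\mathcal N_C$ is the normal cone of convex analysis ($\varnothing$ outside $C$). A feasible $\bar w$ is AM-regular if $\limsup_{w\to\bar w,\,z\to0}\mathcal M(w,z)\subset\mathcal M(\bar w,0)$, where $\mathcal M(w,z):=G'(w)^*\mathcal N_C(G(w)-z)+\mathcal N^{\lim}_D(w)$. In the present setting $G=(G_1,\dots,G_m)$, $I(\bar w):=\{i\in\{1,\dots,m_1\}: G_i(\bar w)=0\}$, $J:=\{m_1+1,\dots,m\}$. RCPLD holds at feasible $\bar w$ if: (i) the family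 $(\nabla G_i(w))_{i\in J}$ has constant rank for all $w$ in a neighborhood of $\bar w$; (ii) there is $S\subset J$ such that $(\nabla G_i(\bar w))_{i\in S}$ is a basis of $\operatorname{span}\{\nabla G_i(\bar w): i\in J\}$; (iii) for each $I\subset I(\bar w)$, each choice of multipliers $\lambda_i\ge0$ ($i\in I$), $\lambda_i\in\mathbb R$ ($i\in S$), not all zero, and each $\eta\in\mathcal N^{\lim}_D(\bar w)$ with $0=\sum_{i\in I\cup S}\lambda_i\nabla G_i(\bar w)+\eta$, there are neighborhoods $U$ of $\bar w$ and $V$ of $\eta$ such that for all $w\in U$ and $\tilde\eta\in\mathcal N^{\lim}_D(w)\cap V$ the vectors $(\nabla G_i(w))_{i\in I\cup S},\tilde\eta$ (if $\tilde\eta\ne0$), resp. $(\nabla G_i(w))_{i\in I\cup S}$ (if $\tilde\eta=0$), are linearly dependent. *)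

(* Euclidean spaces are modelled as row vectors 'rV[R]_n with the Euclidean
   inner product [dotv] below (the topology of 'rV is the product topology,
   which is the Euclidean one). *)
From HB Require Import structures.
From mathcomp Require Import all_boot all_order all_algebra.
From mathcomp Require Import all_classical all_reals all_analysis.
Set Implicit Arguments. Unset Strict Implicit. Unset Printing Implicit Defensive.
Import Order.TTheory GRing.Theory Num.Theory.
Import numFieldNormedType.Exports.
Local Open Scope classical_set_scope.
Local Open Scope ring_scope.

Section Defs.
Variable R : realType.

Definition dotv k (u v : 'rV[R]_k) : R := \sum_(j < k) u 0 j * v 0 j.

Definition proj_set n (D : set 'rV[R]_n) (x : 'rV[R]_n) : set 'rV[R]_n :=
  [set p | D p /\ forall y, D y -> dotv (x - p) (x - p) <= dotv (x - y) (x - y)].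

Definition prox_cone n (D : set 'rV[R]_n) (w : 'rV[R]_n) : set 'rV[R]_n :=
  [set v | exists t : R, exists p, 0 <= t /\ proj_set D w p /\ v = t *: (w - p)].

Definition outer_limit a b (S : 'rV[R]_a -> set 'rV[R]_b) (xbar : 'rV[R]_a)
  : set 'rV[R]_b :=
  [set v | exists (x : nat -> 'rV[R]_a) (u : nat -> 'rV[R]_b),
     x @ \oo --> xbar /\ u @ \oo --> v /\ forall k, S (x k) (u k)].

Definition lim_normal_cone n (D : set 'rV[R]_n) (wbar : 'rV[R]_n) : set 'rV[R]_n :=
  [set v | D wbar /\ outer_limit (prox_cone D) wbar v].

Definition conv_normal_cone m (C : set 'rV[R]_m) (y : 'rV[R]_m) : set 'rV[R]_m :=
  [set l | C y /\ forall c, C c -> dotv l (c - y) <= 0].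

Definition C_set m1 m2 : set 'rV[R]_(m1 + m2) :=
  [set y : 'rV[R]_(m1 + m2) | forall i : 'I_(m1 + m2),
     (if (i < m1)%N then y 0 i <= 0 else y 0 i == 0)].

(* Pointwise multiplier map M(w,z) = G'(w)^* N_C(G(w)-z) + N^lim_D(w),
   where G'(w)^* l = sum_i l_i grad G_i(w). *)
Definition M_map n m (C : set 'rV[R]_m) (D : set 'rV[R]_n)
  (G : 'rV[R]_n -> 'rV[R]_m) (dG : 'I_m -> 'rV[R]_n -> 'rV[R]_n)
  (w : 'rV[R]_n) (z : 'rV[R]_m) : set 'rV[R]_n :=
  [set v | exists l eta, conv_normal_cone C (G w - z) l /\
      lim_normal_cone D w eta /\ v = \sum_(i < m) l 0 i *: dG i w + eta].

(* AM-regularity: limsup_{w->wbar, z->0} M(w,z) is contained in M(wbar,0) *)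
Definition AM_regular n m (C : set 'rV[R]_m) (D : set 'rV[R]_n)
  (G : 'rV[R]_n -> 'rV[R]_m) (dG : 'I_m -> 'rV[R]_n -> 'rV[R]_n)
  (wbar : 'rV[R]_n) : Prop :=
  forall v, (exists (w : nat -> 'rV[R]_n) (z : nat -> 'rV[R]_m)
                    (u : nat -> 'rV[R]_n),
               w @ \oo --> wbar /\ z @ \oo --> (0 : 'rV[R]_m) /\ u @ \oo --> v /\
               forall k, M_map C D G dG (w k) (z k) (u k)) ->
            M_map C D G dG wbar 0 v.

Definition lin_indep_on n m (A : {set 'I_m}) (f : 'I_m -> 'rV[R]_n) : Prop :=
  forall c : 'I_m -> R, \sum_(i in A) c i *: f i = 0 -> forall i, i \in A -> c i = 0.

Definition fam_rank n m (A : {set 'I_m}) (f : 'I_m -> 'rV[R]_n) : nat :=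
  \rank (\matrix_(i < m) (if i \in A then f i else 0)).

Definition basis_of_span n m (S J : {set 'I_m}) (f : 'I_m -> 'rV[R]_n) : Prop :=
  S \subset J /\ lin_indep_on S f /\
  forall j, j \in J -> exists c : 'I_m -> R, f j = \sum_(i in S) c i *: f i.

Definition RCPLD n m1 m2 (D : set 'rV[R]_n)
  (G : 'rV[R]_n -> 'rV[R]_(m1 + m2))
  (dG : 'I_(m1 + m2) -> 'rV[R]_n -> 'rV[R]_n) (wbar : 'rV[R]_n) : Prop :=
  let J : {set 'I_(m1 + m2)} := finset (fun i : 'I_(m1 + m2) => (m1 <= i)%N) in
  let Iact : {set 'I_(m1 + m2)} := finset (fun i : 'I_(m1 + m2) => (i < m1)%N && (G wbar 0 i == 0)) in
  (\forall w \near wbar, fam_rank J (dG^~ w) = fam_rank J (dG^~ wbar)) /\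
  exists S : {set 'I_(m1 + m2)},
    basis_of_span S J (dG^~ wbar) /\
    forall (I : {set 'I_(m1 + m2)}) (lam : 'I_(m1 + m2) -> R) (eta : 'rV[R]_n),
      I \subset Iact ->
      (forall i, i \in I -> 0 <= lam i) ->
      (exists i, i \in I :|: S /\ lam i != 0) ->
      lim_normal_cone D wbar eta ->
      0 = \sum_(i in I :|: S) lam i *: dG i wbar + eta ->
      exists U V, nbhs wbar U /\ nbhs eta V /\
        forall w teta, U w -> lim_normal_cone D w teta -> V teta ->
          if teta != 0 then
            exists (mu : 'I_(m1 + m2) -> R) (nu : R),
              ((exists i, i \in I :|: S /\ mu i != 0) \/ nu != 0) /\
              \sum_(i in I :|: S) mu i *: dG i w + nu *: teta = 0
          else
            exists mu : 'I_(m1 + m2) -> R,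
              (exists i, i \in I :|: S /\ mu i != 0) /\
              \sum_(i in I :|: S) mu i *: dG i w = 0.

Definition C1_with_gradients n m (G : 'rV[R]_n -> 'rV[R]_m)
  (dG : 'I_m -> 'rV[R]_n -> 'rV[R]_n) : Prop :=
  forall i : 'I_m,
    (forall w, differentiable (fun x => G x 0 i) w /\
       forall h, 'd (fun x => G x 0 i) w h = dotv (dG i w) h) /\
    continuous (dG i).

End Defs.

From HB Require Import structures.
From mathcomp Require Import all_boot all_order all_algebra.
From mathcomp Require Import all_classical all_reals all_analysis.
From mathcomp Require Import lra zify.
Import Order.TTheory GRing.Theory Num.Theory.
Import numFieldNormedType.Exports.
Local Open Scope classical_set_scope.
Local Open Scope ring_scope.
Set Implicit Arguments. Unset Strict Implicit. Unset Printing Implicit Defensive.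

(* Let v_k in M(w_k, z_k) with w_k -> wbar, z_k -> 0, v_k -> v.
   1. For large k the inequality constraints inactive at wbar stay inactive
      at (w_k, z_k), so their multipliers vanish; the gradients indexed by the
      basis S stay linearly independent (an open condition) and, by the
      constant rank assumption, still span all equality gradients.  Hence
      v_k = sum_{I_k u S} lam_i grad G_i(w_k) + eta_k with I_k among the
      constraints active at wbar, lam >= 0 on I_k and eta_k in N^lim_D(w_k).
   2. A Caratheodory-type reduction picks such a representation minimising
      |I_k| + [eta_k <> 0]; then the gradients on I_k u S together with eta_k
      admit no nontrivial linear relation.
   3. If the multipliers are bounded, a convergent subsequence yields
      v in M(wbar, 0), since the graph of N^lim_D is closed.  If they are
      unbounded, normalising gives a nontrivial relation at wbar with a fixed
      index set; RCPLD (iii) transports it to w_k for large k, contradicting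
      step 2.
   The file develops subsequence extraction, limits in 'rV, the two normal
   cones, the linear algebra of step 1, the reduction of step 2, and the two
   cases of step 3, before assembling the theorem. *)

Lemma not_eventually (P : nat -> Prop) :
  ~ (\forall k \near \oo, P k) -> forall K, exists2 k, (K <= k)%N & ~ P k.
Proof.
move=> notP K; apply: contrapT => H; apply: notP; exists K => // k /= Kk.
by apply: contrapT => nPk; apply: H; exists k.
Qed.

Lemma increasing_seq_ge (f : nat -> nat) : increasing_seq f -> forall k, (k <= f k)%N.
Proof.
move=> /increasing_seqP hf; elim=> // k IH; exact: leq_ltn_trans IH (hf k).
Qed.

Lemma increasing_seq_cvg (f : nat -> nat) : increasing_seq f -> f @ \oo --> \oo.
Proof.
move=> hf A [N _ HN]; exists N => // k /= Nk; apply: HN.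
exact: leq_trans Nk (increasing_seq_ge hf k).
Qed.

Lemma cvg_subseq {T : topologicalType} (x : nat -> T) (l : T) (f : nat -> nat) :
  increasing_seq f -> x @ \oo --> l -> x \o f @ \oo --> l.
Proof. by move=> hf hx; apply: cvg_comp (increasing_seq_cvg hf) hx. Qed.

Lemma increasing_seq_comp (f g : nat -> nat) :
  increasing_seq f -> increasing_seq g -> increasing_seq (f \o g).
Proof. by move=> hf hg a b /=; rewrite hf; apply: hg. Qed.

Lemma extract_subseq (P : nat -> nat -> Prop) :
  (forall j K, exists2 k, (K <= k)%N & P j k) ->
  exists2 f : nat -> nat, increasing_seq f & forall j, P j (f j).
Proof.
move=> H.
have /choice [pick Hpick] : forall jK : nat * nat,
    exists k, (jK.2 <= k)%N /\ P jK.1 k.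
  by move=> [j K]; have [k Kk Pk] := H j K; exists k.
pose f := fix f j := if j is j'.+1 then pick (j, (f j').+1) else pick (0, 0)%N.
exists f; last by case=> [|j]; [case: (Hpick (0, 0)%N) | case: (Hpick (j.+1, (f j).+1))].
by apply/increasing_seqP => j /=; case: (Hpick (j.+1, (f j).+1)).
Qed.

Lemma finType_const_subseq (T : finType) (x : nat -> T) :
  exists c, exists2 f : nat -> nat, increasing_seq f & forall k, x (f k) = c.
Proof.
have [c [A Aoo Ac]] := finite_range_cst_subsequence (finite_finset (X := range x)).
have [|f [hf _ Af]] := infinite_increasing_seq_wf _ Aoo 0%N.
  by move=> N; apply: sub_finite_set (finite_II N.+1) => k /=.
by exists c, f => // k; apply/Ac.
Qed.

Section SequenceLimits.
Variable R : realType.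

Lemma cvg_harmonic_close {V : normedModType R} (y z : nat -> V) (l : V) :
  y @ \oo --> l -> (forall k, `|y k - z k| <= k.+1%:R^-1) -> z @ \oo --> l.
Proof.
move=> hy hyz.
have hyz0 : (fun k => y k - z k) @ \oo --> 0.
  apply/cvgrPdist_lt => e e0.
  have /cvgrPdist_lt/(_ e e0) := @cvg_harmonic R; apply: filterS => k.
  rewrite !sub0r !normrN /harmonic /= ger0_norm ?invr_ge0 ?ler0n //.
  exact: le_lt_trans (hyz k).
suff -> : z = (fun k => y k - (y k - z k)) by rewrite -[l]subr0; exact: cvgB.
by apply/funext => k; rewrite opprB addrC subrK.
Qed.

Lemma bounded_cvg_subseq p (x : nat -> 'rV[R]_p) (M : R) :
  (forall k, `|x k| <= M) ->
  exists (l : 'rV[R]_p), exists2 f : nat -> nat, increasing_seq f & x \o f @ \oo --> l.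
Proof.
move=> xM; pose A := [set y : 'rV[R]_p | `|y| <= M].
have cptA : compact A.
  apply: bounded_closed_compact.
    exists M; split; first by rewrite num_real.
    by move=> r Mr y /= yM; apply: le_trans yM (ltW Mr).
  apply: (preimage_closed (f := fun y : 'rV[R]_p => `|y|) (D := [set r | r <= M])).
    by move=> y _; apply: norm_continuous.
  exact: closed_le.
have xA : (x @ \oo) A by exists 0%N => // k _; exact: xM.
have [l [_ cl]] := cptA (x @ \oo) _ xA.
have [f hf xfl] : exists2 f : nat -> nat, increasing_seq f &
    forall j, `|l - x (f j)| < j.+1%:R^-1.
  apply: (@extract_subseq (fun j k => `|l - x k| < j.+1%:R^-1)) => j K.
  have tail : (x @ \oo) (x @` [set k | (K <= k)%N]).
    by exists K => // k /= Kk; exists k.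
  have lball : nbhs l (ball l j.+1%:R^-1).
    by apply: nbhsx_ballx; rewrite invr_gt0 ltr0n.
  have [_ [[k Kk <-]]] := cl _ _ tail lball.
  by rewrite -ball_normE; exists k.
exists l, f => //; apply: (cvg_harmonic_close (cvg_cst l)) => j.
exact: ltW (xfl j).
Qed.

Lemma lim_const {V : normedModType R} (x : nat -> V) (a l : V) :
  (forall k, x k = a) -> x @ \oo --> l -> l = a.
Proof.
move=> xa hx; have xcst : x = cst a by apply/funext.
have ha : x @ \oo --> a by rewrite xcst; exact: cvg_cst.
exact: cvg_unique hx ha.
Qed.

Lemma normalized_cvg_subseq p (c : nat -> 'rV[R]_p) : (forall k, c k != 0) ->
  exists (r : 'rV[R]_p) (f : nat -> nat), [/\ increasing_seq f,
    (fun k => `|c (f k)|^-1 *: c (f k)) @ \oo --> r & `|r| = 1].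
Proof.
move=> c0.
have unit k : `| `|c k|^-1 *: c k| = 1.
  by rewrite normrZ normfV normr_id mulVf // normr_eq0.
have le1 k : `| `|c k|^-1 *: c k| <= 1 by rewrite unit.
have [r [f hf hr]] := bounded_cvg_subseq le1.
exists r, f; split => //.
exact: lim_const (fun k => unit (f k)) (cvg_norm hr).
Qed.

Lemma cvg_coord p q (x : nat -> 'M[R]_(p, q)) (l : 'M[R]_(p, q)) i j :
  x @ \oo --> l -> (fun k => x k i j) @ \oo --> l i j.
Proof. by move=> hx; apply: cvg_comp hx (@coord_continuous _ _ _ i j l). Qed.

Lemma cvg_lincomb N n (c : nat -> 'rV[R]_N) (cl : 'rV[R]_N)
    (g : 'I_N -> nat -> 'rV[R]_n) (gl : 'I_N -> 'rV[R]_n) :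
  c @ \oo --> cl -> (forall i, g i @ \oo --> gl i) ->
  (fun k => \sum_i c k 0 i *: g i k) @ \oo --> \sum_i cl 0 i *: gl i.
Proof.
move=> hc hg; apply: (@cvg_big _ _ +%R 0 xpredT add_continuous _ \oo _
   (fun i k => c k 0 i *: g i k) (fun i => cl 0 i *: gl i)) => // i _.
by apply: cvgZ; [exact: cvg_coord | exact: hg].
Qed.

Lemma lim_coord_zero N (x : nat -> 'rV[R]_N) (r : 'rV[R]_N) i :
  x @ \oo --> r -> (forall k, x k 0 i = 0) -> r 0 i = 0.
Proof. by move=> hx x0; apply: lim_const x0 _; exact: cvg_coord. Qed.

Lemma lim_coord_ge0 N (x : nat -> 'rV[R]_N) (r : 'rV[R]_N) i :
  x @ \oo --> r -> (forall k, 0 <= x k 0 i) -> 0 <= r 0 i.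
Proof.
move=> hx x0; have hxi : (fun k => x k 0 i) @ \oo --> r 0 i by exact: cvg_coord.
by apply: (closed_cvg _ (@closed_ge R 0) _ _ hxi); apply: nearW.
Qed.

Lemma nonzero_coord N (r : 'rV[R]_N) : r != 0 -> exists i, r 0 i != 0.
Proof.
move=> r0; apply: contrapT => H; move/negP: r0; apply.
apply/eqP/rowP => i; rewrite mxE; apply: contrapT => /eqP ri.
by apply: H; exists i.
Qed.

Lemma unbounded_subseq (s : nat -> R) :
  ~ (exists M, forall k, s k <= M) ->
  exists2 f : nat -> nat, increasing_seq f & forall j, j.+1%:R <= s (f j).
Proof.
move=> unb; apply: (@extract_subseq (fun j k => j.+1%:R <= s k)) => j K.
apply: contrapT => small; apply: unb.
exists (j.+1%:R + \sum_(k < K) `|s k|) => k.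
have sum0 : 0 <= \sum_(k < K) `|s k| by apply: sumr_ge0 => i _.
case: (leqP K k) => [Kk|kK].
  have : ~ j.+1%:R <= s k by move=> sk; apply: small; exists k.
  by move/negP; rewrite -ltNge => sk; apply/ltW/(lt_le_trans sk); rewrite lerDl.
apply: le_trans (ler_norm (s k)) _; apply: le_trans (_ : _ <= \sum_(k < K) `|s k|) _.
  by rewrite (bigD1 (Ordinal kK)) //= lerDl; apply: sumr_ge0 => i _.
by rewrite lerDr.
Qed.

End SequenceLimits.

Section LimitingNormalCone.
Variables (R : realType) (n : nat) (D : set 'rV[R]_n).

Lemma lim_normal_coneZ w (eta : 'rV[R]_n) t :
  0 <= t -> lim_normal_cone D w eta -> lim_normal_cone D w (t *: eta).
Proof.
move=> t0 [Dw [x [u [hx [hu hxu]]]]]; split => //.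
exists x, (fun k => t *: u k); split => //; split; first exact: cvgZ (cvg_cst t) hu.
move=> k; have [s [p [s0 [pp ->]]]] := hxu k.
by exists (t * s), p; rewrite scalerA mulr_ge0.
Qed.

(* The graph of the limiting normal cone is closed over D: a diagonal argument
   on the defining sequences of proximal normals. *)
Lemma lim_normal_cone_closed (w : nat -> 'rV[R]_n) wbar
    (eta : nat -> 'rV[R]_n) (etal : 'rV[R]_n) :
  D wbar -> w @ \oo --> wbar -> eta @ \oo --> etal ->
  (forall k, lim_normal_cone D (w k) (eta k)) -> lim_normal_cone D wbar etal.
Proof.
move=> Dwbar hw heta hN; split => //.
have /choice [xu Hxu] : forall k, exists xu : 'rV[R]_n * 'rV[R]_n,
    [/\ `|w k - xu.1| <= k.+1%:R^-1, `|eta k - xu.2| <= k.+1%:R^-1 &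
        prox_cone D xu.1 xu.2].
  move=> k; have [_ [x [u [hx [hu hxu]]]]] := hN k.
  have ek : 0 < k.+1%:R^-1 :> R by rewrite invr_gt0 ltr0n.
  move: hx hu => /cvgrPdist_lt /(_ _ ek) near_x /cvgrPdist_lt /(_ _ ek) near_u.
  have [j [xj uj]] := filter_ex (filterI near_x near_u).
  by exists (x j, u j); split => /=; [exact: ltW | exact: ltW | exact: hxu].
exists (fst \o xu), (snd \o xu); split; last split.
- by apply: (cvg_harmonic_close hw) => k; case: (Hxu k).
- by apply: (cvg_harmonic_close heta) => k; case: (Hxu k).
- by move=> k; case: (Hxu k).
Qed.

End LimitingNormalCone.

Section BoxNormalCone.
Variables (R : realType) (m1 m2 : nat).
Local Notation N := (m1 + m2)%N.

Lemma dotv_delta (l : 'rV[R]_N) (i : 'I_N) a :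
  dotv l (a *: delta_mx 0 i) = a * l 0 i.
Proof.
rewrite /dotv (bigD1 i) //= big1 ?addr0; first by rewrite !mxE !eqxx mulr1 mulrC.
by move=> j ji; rewrite !mxE (negbTE ji) andbF !mulr0.
Qed.

Lemma C_set_perturb (y : 'rV[R]_N) (i : 'I_N) a :
  C_set y -> (i < m1)%N -> y 0 i + a <= 0 -> C_set (y + a *: delta_mx 0 i).
Proof.
move=> Cy im ya j; have := Cy j; rewrite !mxE.
by case: (eqVneq j i) => [->|ji]; rewrite ?im ?eqxx ?mulr1 // andbF mulr0 addr0.
Qed.

Lemma C_normal_coneP (y l : 'rV[R]_N) :
  conv_normal_cone (@C_set R m1 m2) y l <->
  C_set y /\ forall i : 'I_N, (i < m1)%N -> 0 <= l 0 i /\ l 0 i * y 0 i = 0.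
Proof.
split=> [[Cy Hl]|[Cy Hl]]; split => //.
  move=> i im; have yi : y 0 i <= 0 by have := Cy i; rewrite im.
  have perturb a : y 0 i + a <= 0 -> a * l 0 i <= 0.
    move=> ya; have := Hl _ (C_set_perturb Cy im ya).
    by rewrite addrAC subrr add0r dotv_delta.
  have := perturb (-1) ltac:(lra); have := perturb (- y 0 i) ltac:(lra).
  have := perturb (y 0 i) ltac:(lra); split; [lra | nra].
move=> c Cc; rewrite /dotv; apply: sumr_le0 => j _; rewrite !mxE.
have := Cy j; have := Cc j; case: ifP => jm.
  by move=> cj yj; have [l0 ly] := Hl j jm; nra.
by move=> /eqP -> /eqP ->; rewrite subrr mulr0.
Qed.

End BoxNormalCone.

Section SupportedSums.
Variables (R : ringType) (V : lmodType R) (N : nat).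

Lemma sum_restrict (T : {set 'I_N}) (c : 'I_N -> R) (v : 'I_N -> V) :
  \sum_(i in T) c i *: v i = \sum_i (if i \in T then c i else 0) *: v i.
Proof. by rewrite big_mkcond /=; apply: eq_bigr => i _; case: ifP; rewrite ?scale0r. Qed.

Lemma sum_supported (T : {set 'I_N}) (c : 'I_N -> R) (v : 'I_N -> V) :
  (forall i, i \notin T -> c i = 0) -> \sum_i c i *: v i = \sum_(i in T) c i *: v i.
Proof.
by move=> c0; rewrite sum_restrict; apply: eq_bigr => i _; case: ifPn => // /c0 ->.
Qed.

End SupportedSums.

Section RowFamilies.
Variables (R : fieldType) (n N : nat) (g : 'I_N -> 'rV[R]_n).

Definition rows_of (T : {set 'I_N}) : 'M[R]_(N, n) :=
  \matrix_(i < N) (if i \in T then g i else 0).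

Lemma row_rows_of T i : row i (rows_of T) = if i \in T then g i else 0.
Proof. by rewrite rowK. Qed.

Lemma mul_rows_of T (x : 'rV[R]_N) : x *m rows_of T = \sum_(i in T) x 0 i *: g i.
Proof.
rewrite mulmx_sum_row [RHS]big_mkcond /=; apply: eq_bigr => i _.
by rewrite row_rows_of; case: ifP => _; rewrite ?scaler0.
Qed.

Lemma rows_ofS (S T : {set 'I_N}) : S \subset T -> (rows_of S <= rows_of T)%MS.
Proof.
move=> ST; apply/row_subP => i; rewrite row_rows_of.
case: ifP => iS; last exact: sub0mx.
by have := row_sub i (rows_of T); rewrite row_rows_of (fintype.subsetP ST i iS).
Qed.

Lemma span_rowsP (S T : {set 'I_N}) :
  (forall j, j \in T -> exists c : 'I_N -> R, g j = \sum_(i in S) c i *: g i) <->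
  (rows_of T <= rows_of S)%MS.
Proof.
split=> [spanS|/row_subP subTS j jT].
  apply/row_subP => j; rewrite row_rows_of.
  case: ifP => jT; last exact: sub0mx.
  have [c ->] := spanS j jT; apply: summx_sub => i iS.
  by apply: scalemx_sub; have := row_sub i (rows_of S); rewrite row_rows_of iS.
have := subTS j; rewrite row_rows_of jT => /submxP [d ->].
by exists (d 0); rewrite mul_rows_of.
Qed.

End RowFamilies.

Lemma rank_le_of_ker (R : fieldType) m n (A B : 'M[R]_(m, n)) :
  (forall x : 'rV[R]_m, x *m A = 0 -> x *m B = 0) -> (\rank B <= \rank A)%N.
Proof.
move=> kerAB.
have kerS : (kermx A <= kermx B)%MS.
  apply/sub_kermxP/row_matrixP => i; rewrite row_mul row0; apply: kerAB.
  by rewrite -row_mul mulmx_ker row0.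
have := mxrankS kerS; rewrite !mxrank_ker.
have := rank_leq_row A; have := rank_leq_row B; lia.
Qed.

Lemma constant_rank_basis (R : realType) (n N : nat) (gw gb : 'I_N -> 'rV[R]_n)
    (S J : {set 'I_N}) :
  basis_of_span S J gb -> lin_indep_on S gw -> fam_rank J gw = fam_rank J gb ->
  forall j, j \in J -> exists c : 'I_N -> R, gw j = \sum_(i in S) c i *: gw i.
Proof.
move=> [SJ [_ /span_rowsP spanb]] indw rkJ; apply/span_rowsP.
have rkSb := mxrankS spanb.
have rkSw : (\rank (rows_of gb S) <= \rank (rows_of gw S))%N.
  apply: rank_le_of_ker => x; rewrite !mul_rows_of => /indw x0.
  by apply: big1 => i iS; rewrite x0 // scale0r.
have [rkSJ <-] := mxrank_leqif_sup (rows_ofS gw SJ).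
move: rkJ; rewrite /fam_rank -/(rows_of gw J) -/(rows_of gb J) => rkJ.
apply/eqP; lia.
Qed.

Section MinimalRepresentation.
Variables (R : realType) (n N : nat) (g : 'I_N -> 'rV[R]_n) (D : set 'rV[R]_n).
Variables (w u : 'rV[R]_n) (S A : {set 'I_N}).

Definition mult_rep (I : {set 'I_N}) (lam : 'rV[R]_N) (eta : 'rV[R]_n) :=
  [/\ I \subset A, (forall i, i \in I -> 0 <= lam 0 i),
      (forall i, i \notin I :|: S -> lam 0 i = 0), lim_normal_cone D w eta &
      u = \sum_i lam 0 i *: g i + eta].

(* The quantity minimised by the Caratheodory-type reduction. *)
Definition rep_size (I : {set 'I_N}) (eta : 'rV[R]_n) := (#|I| + (eta != 0%R))%N.

Definition minimal_rep I lam eta := mult_rep I lam eta /\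
  forall I' lam' eta', mult_rep I' lam' eta' -> (rep_size I eta <= rep_size I' eta')%N.

Lemma minimal_rep_exists I lam eta : mult_rep I lam eta ->
  exists I' lam' eta', minimal_rep I' lam' eta'.
Proof.
move=> rep0.
pose P k := `[< exists I lam eta, mult_rep I lam eta /\ rep_size I eta = k >].
have exP : exists k, P k by exists (rep_size I eta); apply/asboolP; exists I, lam, eta.
case: (ex_minnP exP) => _ /asboolP [I' [lam' [eta' [rep' <-]]]] minP.
exists I', lam', eta'; split => // I'' lam'' eta'' rep''.
by apply: minP; apply/asboolP; exists I'', lam'', eta''.
Qed.

Definition shift_mult (I : {set 'I_N}) (lam : 'rV[R]_N) (mu : 'I_N -> R) (t : R) :=
  \row_i (lam 0 i - t * (if i \in I :|: S then mu i else 0)).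

Lemma rep_shift I lam eta (mu : 'I_N -> R) (nu t : R) :
  mult_rep I lam eta -> \sum_(i in I :|: S) mu i *: g i + nu *: eta = 0 ->
  (forall i, i \in I -> t * mu i <= lam 0 i) -> (eta != 0 -> t * nu <= 1) ->
  mult_rep [set i in I | t * mu i < lam 0 i] (shift_mult I lam mu t)
           ((1 - t * nu) *: eta).
Proof.
move=> [IA lam0 lamS etaN ueq] rel lamI etaI.
have lamI' i : i \in I -> shift_mult I lam mu t 0 i = lam 0 i - t * mu i.
  by move=> iI; rewrite mxE inE iI.
split.
- by apply: fintype.subset_trans IA; apply/fintype.subsetP => i; rewrite inE => /andP[].
- by move=> i; rewrite inE => /andP[iI lt]; rewrite lamI' // subr_ge0 ltW.
- move=> i; rewrite !inE negb_or => /andP[notI' iS].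
  case: (boolP (i \in I)) => iI.
    move: notI' (lamI i iI); rewrite iI /= -leNgt lamI' // => ge le.
    by apply/eqP; rewrite subr_eq0 eq_le ge le.
  by rewrite mxE inE (negbTE iI) (negbTE iS) lamS ?inE ?(negbTE iI) // mulr0 subr0.
- have [eta0|eta0] := eqVneq eta 0; first by rewrite eta0 scaler0 -eta0.
  by apply: lim_normal_coneZ etaN; rewrite subr_ge0 etaI.
- have sumS : nu *: eta = - \sum_(i in I :|: S) mu i *: g i.
    by apply/eqP; rewrite -addr_eq0 addrC rel.
  have -> : \sum_i shift_mult I lam mu t 0 i *: g i =
      \sum_i lam 0 i *: g i + (t * nu) *: eta.
    rewrite -scalerA sumS scalerN sum_restrict scaler_sumr -sumrB.
    by apply: eq_bigr => i _; rewrite mxE scalerBl scalerA.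
  by rewrite ueq scalerBl scale1r -addrA [_ *: eta + _]addrC subrK.
Qed.

(* A minimal representation admits no relation that is positive on some
   multiplier of I or on a nonzero eta: shifting by the largest admissible
   step would decrease [rep_size]. *)
Lemma minimal_rep_no_positive_relation I lam eta (mu : 'I_N -> R) (nu : R) :
  minimal_rep I lam eta ->
  \sum_(i in I :|: S) mu i *: g i + nu *: eta = 0 ->
  ~ ((exists2 i, i \in I & 0 < mu i) \/ (eta != 0 /\ 0 < nu)).
Proof.
move=> [repI minI] rel pos; have [_ lam0 _ _ _] := repI.
pose d (j : option 'I_N) := if j is Some i then mu i else nu.
pose x (j : option 'I_N) := if j is Some i then lam 0 i else 1.
pose act (j : option 'I_N) := if j is Some i then i \in I else eta != 0.
have x_ge0 j : act j -> 0 <= x j by case: j => [i /lam0|_] //=; exact: ler01.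
have [js actjs [t t_feasible t_tight]] : exists2 js, act js & exists2 t : R,
    (forall j, act j -> t * d j <= x j) & t * d js = x js.
  pose P := [pred j | act j && (0 < d j)].
  have [j0 Pj0] : exists j0, P j0.
    by case: pos => [[i iI mui]|[eta0 nu0]]; [exists (Some i) | exists None];
      apply/andP.
  case: (arg_minP (fun j => x j / d j) Pj0) => js /andP[actjs djs] jsmin.
  exists js => //; exists (x js / d js); last by rewrite divfK ?gt_eqF.
  move=> j actj; have [dj|dj] := leP (d j) 0.
    have t0 : 0 <= x js / d js by rewrite divr_ge0 ?x_ge0 ?ltW.
    have := x_ge0 j actj; nra.
  by rewrite -ler_pdivlMr // jsmin //= actj dj.
have rep' := rep_shift repI rel (fun i iI => t_feasible (Some i) iI) (t_feasible None).
have := minI _ _ _ rep'; rewrite leqNgt => /negP; apply; rewrite /rep_size.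
have I'I : [set i in I | t * mu i < lam 0 i] \subset I.
  by apply/fintype.subsetP => i; rewrite inE => /andP[].
have eta'le : (((1 - t * nu) *: eta != 0%R) <= (eta != 0%R))%N.
  by have [->|_] := eqVneq eta 0; rewrite ?scaler0 ?eqxx ?leq_b1.
move: actjs t_tight; case: js => [i|] /= act_i tight.
  apply: leq_ltn_trans (leq_add (leqnn _) eta'le) _; rewrite ltn_add2r.
  apply/proper_card/properP; split => //; exists i => //.
  by rewrite inE act_i /= tight ltxx.
by rewrite tight subrr scale0r eqxx addn0 act_i addn1 ltnS subset_leq_card.
Qed.

Lemma minimal_rep_indep I lam eta (mu : 'I_N -> R) (nu : R) :
  lin_indep_on S g -> minimal_rep I lam eta ->
  \sum_(i in I :|: S) mu i *: g i + nu *: eta = 0 ->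
  (forall i, i \in I :|: S -> mu i = 0) /\ nu *: eta = 0.
Proof.
move=> indS minrep rel.
have pos := minimal_rep_no_positive_relation minrep rel.
have neg : ~ ((exists2 i, i \in I & 0 < - mu i) \/ (eta != 0 /\ 0 < - nu)).
  apply: minimal_rep_no_positive_relation minrep _.
  have -> : \sum_(i in I :|: S) - mu i *: g i = - \sum_(i in I :|: S) mu i *: g i.
    by rewrite -sumrN; apply: eq_bigr => i _; rewrite scaleNr.
  by rewrite scaleNr -opprD rel oppr0.
have muI i : i \in I -> mu i = 0.
  move=> iI; case: (ltrgtP (mu i) 0) => // mui; exfalso.
    by apply: neg; left; exists i; rewrite // oppr_gt0.
  by apply: pos; left; exists i.
have nueta : nu *: eta = 0.
  have [->|eta0] := eqVneq eta 0; first by rewrite scaler0.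
  case: (ltrgtP nu 0) => [nu0|nu0|->]; last by rewrite scale0r.
    by exfalso; apply: neg; right; rewrite oppr_gt0.
  by exfalso; apply: pos; right.
split => // i; rewrite inE => /orP[/muI //|iS].
apply: indS i iS; rewrite -[RHS](_ : \sum_(i in I :|: S) mu i *: g i = 0).
  rewrite !sum_restrict; apply: eq_bigr => j _; rewrite inE.
  by case: (boolP (j \in I)) => //= jI; rewrite muI // if_same.
by move: rel; rewrite nueta addr0.
Qed.

End MinimalRepresentation.

Section IndependenceOpen.
Variables (R : realType) (n N : nat).

Lemma lin_indep_eventually (g : 'I_N -> 'rV[R]_n -> 'rV[R]_n) (S : {set 'I_N})
    (wbar : 'rV[R]_n) (w : nat -> 'rV[R]_n) :
  (forall i, continuous (g i)) -> w @ \oo --> wbar ->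
  lin_indep_on S (g^~ wbar) -> \forall k \near \oo, lin_indep_on S (g^~ (w k)).
Proof.
move=> gc hw indS; apply: contrapT => /not_eventually dep.
have [f hf fdep] := @extract_subseq (fun _ k => ~ lin_indep_on S (g^~ (w k))) (fun=> dep).
have /choice [c hc] : forall j, exists c : 'rV[R]_N, [/\ c != 0,
    forall i, i \notin S -> c 0 i = 0 & \sum_i c 0 i *: g i (w (f j)) = 0].
  move=> j; apply: contrapT => nodep; apply: (fdep j) => c csum i iS.
  apply: contrapT => ci; apply: nodep; exists (\row_i (if i \in S then c i else 0)).
  split.
  - by apply/negP => /eqP /rowP /(_ i); rewrite !mxE iS.
  - by move=> i' i'S; rewrite mxE (negbTE i'S).
  - apply: etrans csum; rewrite sum_restrict.
    by apply: eq_bigr => i' _; rewrite mxE.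
have c0 j : c j != 0 by case: (hc j).
have cS j i : i \notin S -> c j 0 i = 0 by case: (hc j) => _ + _; apply.
have csum j : \sum_i c j 0 i *: g i (w (f j)) = 0 by case: (hc j).
have [r [f2 [hf2 hr r1]]] := normalized_cvg_subseq c0.
have rS i : i \notin S -> r 0 i = 0.
  move=> iS; apply: (lim_coord_zero hr) => k.
  by rewrite mxE cS ?mulr0.
have wf : (fun k => w (f (f2 k))) @ \oo --> wbar.
  exact: cvg_subseq (increasing_seq_comp hf hf2) hw.
have lim := cvg_lincomb hr (fun i => cvg_comp _ _ wf (gc i wbar)).
have rel : \sum_(i in S) r 0 i *: g i wbar = 0.
  rewrite -(sum_supported _ rS); apply: lim_const lim => k /=.
  rewrite (eq_bigr (fun i => `|c (f2 k)|^-1 *: (c (f2 k) 0 i *: g i (w (f (f2 k)))))).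
    by rewrite -scaler_sumr csum scaler0.
  by move=> i _; rewrite mxE scalerA.
have r0 : r = 0.
  apply/rowP => i; rewrite mxE; case: (boolP (i \in S)) => [iS|/rS //].
  exact: indS rel i iS.
by move: r1; rewrite r0 normr0 => /eqP; rewrite eq_sym oner_eq0.
Qed.

End IndependenceOpen.

Section NormalizedSequences.
Variable R : realType.

Lemma unbounded_normalized_subseq (T : finType) p (I : nat -> T) (c : nat -> 'rV[R]_p) :
  ~ (exists M, forall k, `|c k| <= M) ->
  exists (I0 : T) (r : 'rV[R]_p) (psi : nat -> nat),
    [/\ increasing_seq psi, forall k, I (psi k) = I0,
        forall k, k.+1%:R <= `|c (psi k)|,
        (fun k => `|c (psi k)|^-1 *: c (psi k)) @ \oo --> r & `|r| = 1].
Proof.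
move=> unb; have [f1 hf1 c_big] := unbounded_subseq unb.
have [I0 [f2 hf2 I0f]] := finType_const_subseq (I \o f1).
have c0 k : c (f1 (f2 k)) != 0.
  by rewrite -normr_gt0; apply: lt_le_trans (c_big (f2 k)); rewrite ltr0n.
have [r [f3 [hf3 hr r1]]] := normalized_cvg_subseq c0.
exists I0, r, (f1 \o (f2 \o f3)); split => //.
- by do 2![apply: increasing_seq_comp => //].
- by move=> k; apply: I0f.
move=> k; apply: le_trans (c_big (f2 (f3 k))); rewrite ler_nat ltnS.
exact: increasing_seq_ge (increasing_seq_comp hf2 hf3) k.
Qed.

Lemma normalized_residual_cvg n N (g : 'I_N -> 'rV[R]_n -> 'rV[R]_n)
    (wbar v : 'rV[R]_n) (w u : nat -> 'rV[R]_n) (c : nat -> 'rV[R]_N) (r : 'rV[R]_N) :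
  (forall i, continuous (g i)) -> w @ \oo --> wbar -> u @ \oo --> v ->
  (forall k, k.+1%:R <= `|c k|) -> (fun k => `|c k|^-1 *: c k) @ \oo --> r ->
  (fun k => `|c k|^-1 *: (u k - \sum_i c k 0 i *: g i (w k))) @ \oo -->
    - \sum_i r 0 i *: g i wbar.
Proof.
move=> g_cont hw hu c_big hr.
have c_pos k : 0 < `|c k| by apply: lt_le_trans (c_big k); rewrite ltr0n.
have cinv : (fun k => `|c k|^-1) @ \oo --> (0 : R).
  apply: (cvg_harmonic_close (cvg_cst 0)) => k.
  rewrite sub0r normrN ger0_norm; last by rewrite invr_ge0 ltW.
  by rewrite lef_pV2 ?posrE ?ltr0n.
have lim_sum : (fun k => \sum_i (`|c k|^-1 *: c k) 0 i *: g i (w k)) @ \oo -->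
    \sum_i r 0 i *: g i wbar.
  apply: (cvg_lincomb (g := fun i k => g i (w k))) => // i.
  by have := cvg_comp _ _ hw (@g_cont i wbar).
have := cvgB (cvgZ cinv hu) lim_sum; rewrite scale0r sub0r => lim.
suff -> : (fun k => `|c k|^-1 *: (u k - \sum_i c k 0 i *: g i (w k))) =
  (fun k => `|c k|^-1 *: u k - \sum_i (`|c k|^-1 *: c k) 0 i *: g i (w k)).
  exact: lim.
apply/funext => k; rewrite scalerBr scaler_sumr; congr (_ - _).
by apply: eq_bigr => i _; rewrite mxE scalerA.
Qed.

End NormalizedSequences.

Definition rcpld_stable_relations (R : realType) (n N : nat) (D : set 'rV[R]_n)
    (dG : 'I_N -> 'rV[R]_n -> 'rV[R]_n) (wbar : 'rV[R]_n) (S Iact : {set 'I_N}) :=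
  forall (I : {set 'I_N}) (lam : 'I_N -> R) (eta : 'rV[R]_n),
    I \subset Iact ->
    (forall i, i \in I -> 0 <= lam i) ->
    (exists i, i \in I :|: S /\ lam i != 0) ->
    lim_normal_cone D wbar eta ->
    0 = \sum_(i in I :|: S) lam i *: dG i wbar + eta ->
    exists U V, nbhs wbar U /\ nbhs eta V /\
      forall w teta, U w -> lim_normal_cone D w teta -> V teta ->
        if teta != 0 then
          exists (mu : 'I_N -> R) (nu : R),
            ((exists i, i \in I :|: S /\ mu i != 0) \/ nu != 0) /\
            \sum_(i in I :|: S) mu i *: dG i w + nu *: teta = 0
        else
          exists mu : 'I_N -> R,
            (exists i, i \in I :|: S /\ mu i != 0) /\
            \sum_(i in I :|: S) mu i *: dG i w = 0.

Section RCPLDLimits.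
Variables (R : realType) (n m1 m2 : nat) (D : set 'rV[R]_n).
Variables (G : 'rV[R]_n -> 'rV[R]_(m1 + m2)) (dG : 'I_(m1 + m2) -> 'rV[R]_n -> 'rV[R]_n).
Variables (wbar : 'rV[R]_n) (S Iact : {set 'I_(m1 + m2)}).
Local Notation N := (m1 + m2)%N.
Hypothesis dG_cont : forall i, continuous (dG i).
Hypothesis D_wbar : D wbar.
Hypothesis C_wbar : C_set (G wbar).
Hypothesis S_eq : forall i, i \in S -> (m1 <= i)%N.
Hypothesis Iact_active : forall i, i \in Iact -> (i < m1)%N /\ G wbar 0 i = 0.

Lemma limit_of_bounded_reps (w u : nat -> 'rV[R]_n) (v : 'rV[R]_n)
    (I : nat -> {set 'I_N}) (lam : nat -> 'rV[R]_N) (eta : nat -> 'rV[R]_n) (M : R) :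
  w @ \oo --> wbar -> u @ \oo --> v ->
  (forall k, mult_rep (dG^~ (w k)) D (w k) (u k) S Iact (I k) (lam k) (eta k)) ->
  (forall k, `|lam k| <= M) -> M_map (@C_set R m1 m2) D G dG wbar 0 v.
Proof.
move=> hw hu reps lamM.
have notS (i : 'I_N) : (i < m1)%N -> i \notin S.
  by move=> im; apply/negP => /S_eq; rewrite leqNgt im.
have lam_ge0 k (i : 'I_N) : (i < m1)%N -> 0 <= lam k 0 i.
  move=> im; have [_ lam0 lamS _ _] := reps k.
  by case: (boolP (i \in I k)) => [/lam0 //|iI]; rewrite lamS // inE negb_or iI notS.
have lam_inactive k (i : 'I_N) : (i < m1)%N -> i \notin Iact -> lam k 0 i = 0.
  move=> im iA; have [IA _ lamS _ _] := reps k; apply: lamS.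
  by rewrite inE negb_or notS // andbT; apply: contra iA; apply: (fintype.subsetP IA).
have [L [f hf hL]] := bounded_cvg_subseq lamM.
have wf := cvg_subseq hf hw.
pose etaL := v - \sum_i L 0 i *: dG i wbar.
have heta : eta \o f @ \oo --> etaL.
  have -> : eta \o f = fun k => u (f k) - \sum_i lam (f k) 0 i *: dG i (w (f k)).
    apply/funext => k /=; have [_ _ _ _ ->] := reps (f k).
    by rewrite [_ + eta _]addrC addrK.
  apply: cvgB; first exact: cvg_subseq hf hu.
  apply: (cvg_lincomb (g := fun i k => dG i (w (f k)))) => // i.
  by have := cvg_comp _ _ wf (@dG_cont i wbar).
exists L, etaL; split; last split.
- apply/C_normal_coneP; rewrite subr0; split => // i im; split.
    by apply: (lim_coord_ge0 hL) => k; apply: lam_ge0.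
  case: (boolP (i \in Iact)) => iA; first by rewrite (Iact_active iA).2 mulr0.
  by rewrite (lim_coord_zero hL (fun k => lam_inactive (f k) i im iA)) mul0r.
- by apply: (lim_normal_cone_closed D_wbar wf heta) => k; case: (reps (f k)).
- by rewrite /etaL addrC subrK.
Qed.

Hypothesis stable : rcpld_stable_relations D dG wbar S Iact.

Lemma rcpld_eventual_relations (I0 : {set 'I_N}) (r : 'rV[R]_N) (etaS : 'rV[R]_n)
    (w th : nat -> 'rV[R]_n) :
  I0 \subset Iact -> (forall i, i \in I0 -> 0 <= r 0 i) ->
  (exists i, i \in I0 :|: S /\ r 0 i != 0) -> lim_normal_cone D wbar etaS ->
  0 = \sum_(i in I0 :|: S) r 0 i *: dG i wbar + etaS ->
  w @ \oo --> wbar -> th @ \oo --> etaS ->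
  (forall k, lim_normal_cone D (w k) (th k)) ->
  \forall k \near \oo, exists (mu : 'I_N -> R) (nu : R),
     ((exists i, i \in I0 :|: S /\ mu i != 0) \/ nu *: th k != 0) /\
     \sum_(i in I0 :|: S) mu i *: dG i (w k) + nu *: th k = 0.
Proof.
move=> I0A r0 rnz etaSN rel hw hth thN.
have [U [V [Uwbar [VetaS UV]]]] := stable I0A r0 rnz etaSN rel.
near=> k; have Uk : U (w k) by near: k; exact: hw.
have Vk : V (th k) by near: k; exact: hth.
have := UV _ _ Uk (thN k) Vk; case: ifPn => [th0|/negPn/eqP th0].
  move=> [mu [nu [nontriv relk]]]; exists mu, nu; split => //.
  by case: nontriv => [|nu0]; [left | right; rewrite scaler_eq0 negb_or nu0].
move=> [mu [nontriv relk]]; exists mu, 0.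
by rewrite scale0r addr0; split => //; left.
Unshelve. all: by end_near.
Qed.

(* Minimal representations have bounded multipliers: otherwise their
   normalised limit is a nontrivial relation at wbar which RCPLD transports
   back, contradicting [minimal_rep_indep]. *)
Lemma minimal_reps_bounded (w u : nat -> 'rV[R]_n) (v : 'rV[R]_n)
    (I : nat -> {set 'I_N}) (lam : nat -> 'rV[R]_N) (eta : nat -> 'rV[R]_n) :
  w @ \oo --> wbar -> u @ \oo --> v ->
  (forall k, lin_indep_on S (dG^~ (w k))) ->
  (forall k, minimal_rep (dG^~ (w k)) D (w k) (u k) S Iact (I k) (lam k) (eta k)) ->
  exists M, forall k, `|lam k| <= M.
Proof.
move=> hw hu indS minreps; apply: contrapT => unb.
have reps k := (minreps k).1.
have [I0 [r [psi [hpsi Ipsi lam_big hr r1]]]] := unbounded_normalized_subseq I unb.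
have wpsi := cvg_subseq hpsi hw.
pose etaS := - \sum_i r 0 i *: dG i wbar.
pose th k := `|lam (psi k)|^-1 *: eta (psi k).
have hth : th @ \oo --> etaS.
  have -> : th = fun k => `|lam (psi k)|^-1 *:
      (u (psi k) - \sum_i lam (psi k) 0 i *: dG i (w (psi k))).
    apply/funext => k; have [_ _ _ _ ueq] := reps (psi k).
    by rewrite /th ueq [_ + eta _]addrC addrK.
  exact: (normalized_residual_cvg dG_cont wpsi (cvg_subseq hpsi hu) lam_big hr).
have thN k : lim_normal_cone D (w (psi k)) (th k).
  by apply: lim_normal_coneZ; [rewrite invr_ge0 | case: (reps (psi k))].
have etaSN : lim_normal_cone D wbar etaS := lim_normal_cone_closed D_wbar wpsi hth thN.
have rS i : i \notin I0 :|: S -> r 0 i = 0.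
  move=> iS; apply: (lim_coord_zero hr) => k; have [_ _ lamS _ _] := reps (psi k).
  by rewrite mxE lamS ?mulr0 // Ipsi.
have r_ge0 i : i \in I0 -> 0 <= r 0 i.
  move=> iI; apply: (lim_coord_ge0 hr) => k; have [_ lam_ge0 _ _ _] := reps (psi k).
  by rewrite mxE mulr_ge0 ?invr_ge0 // lam_ge0 // Ipsi.
have rnz : exists i, i \in I0 :|: S /\ r 0 i != 0.
  have [|i ri] := @nonzero_coord R N r; first by rewrite -normr_eq0 r1 oner_eq0.
  by exists i; split => //; apply: contraNT ri => /rS ->.
have rel : 0 = \sum_(i in I0 :|: S) r 0 i *: dG i wbar + etaS.
  by rewrite -(sum_supported _ rS) subrr.
have I0A : I0 \subset Iact by rewrite -(Ipsi 0%N); case: (reps (psi 0%N)).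
have [k [mu [nu [nontriv relk]]]] :=
  filter_ex (rcpld_eventual_relations I0A r_ge0 rnz etaSN rel wpsi hth thN).
have minrep := minreps (psi k); rewrite Ipsi in minrep.
have [|mu0 nueta0] := minimal_rep_indep (mu := mu) (nu := nu * `|lam (psi k)|^-1)
  (indS (psi k)) minrep; first by rewrite -scalerA.
case: nontriv => [[i [iIS]]|]; first by rewrite mu0 ?eqxx.
by rewrite /th scalerA nueta0 eqxx.
Qed.

Lemma rcpld_limit (w u : nat -> 'rV[R]_n) (v : 'rV[R]_n) :
  w @ \oo --> wbar -> u @ \oo --> v ->
  (forall k, lin_indep_on S (dG^~ (w k))) ->
  (forall k, exists I lam eta, mult_rep (dG^~ (w k)) D (w k) (u k) S Iact I lam eta) ->
  M_map (@C_set R m1 m2) D G dG wbar 0 v.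
Proof.
move=> hw hu indS reps.
have /choice [rep minrep] : forall k, exists t : {set 'I_N} * 'rV[R]_N * 'rV[R]_n,
    minimal_rep (dG^~ (w k)) D (w k) (u k) S Iact t.1.1 t.1.2 t.2.
  move=> k; have [I [lam [eta /minimal_rep_exists [I' [lam' [eta' m]]]]]] := reps k.
  by exists (I', lam', eta').
have [M lamM] := minimal_reps_bounded hw hu indS minrep.
exact: limit_of_bounded_reps hw hu (fun k => (minrep k).1) lamM.
Qed.

End RCPLDLimits.

Section MultiplierReduction.
Variables (R : realType) (n m1 m2 : nat) (D : set 'rV[R]_n).
Variables (G : 'rV[R]_n -> 'rV[R]_(m1 + m2)) (dG : 'I_(m1 + m2) -> 'rV[R]_n -> 'rV[R]_n).
Variables (S Iact : {set 'I_(m1 + m2)}).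
Local Notation N := (m1 + m2)%N.
Hypothesis S_eq : forall i, i \in S -> (m1 <= i)%N.
Hypothesis Iact_ineq : forall i, i \in Iact -> (i < m1)%N.

Lemma reduce_multipliers (w : 'rV[R]_n) (z : 'rV[R]_N) (u : 'rV[R]_n) :
  (forall j : 'I_N, (m1 <= j)%N -> exists c : 'I_N -> R,
     dG j w = \sum_(i in S) c i *: dG i w) ->
  (forall i : 'I_N, (i < m1)%N -> i \notin Iact -> G w 0 i - z 0 i < 0) ->
  M_map (@C_set R m1 m2) D G dG w z u ->
  exists I lam eta, mult_rep (dG^~ w) D w u S Iact I lam eta.
Proof.
move=> spanS inactive [l [eta [/C_normal_coneP [_ lsign] [etaN ueq]]]].
have notS (i : 'I_N) : (i < m1)%N -> i \notin S.
  by move=> im; apply/negP => /S_eq; rewrite leqNgt im.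
have /choice [c hc] : forall j : 'I_N, exists c : 'I_N -> R,
    (m1 <= j)%N -> dG j w = \sum_(i in S) c i *: dG i w.
  move=> j; case: (leqP m1 j) => [/spanS [c hc]|_]; first by exists c.
  by exists (fun=> 0).
pose a i := if i \in Iact then l 0 i else 0.
pose b i := if i \in S then \sum_(j : 'I_N | (m1 <= j)%N) l 0 j * c j i else 0.
exists Iact, (\row_i (a i + b i)), eta; split => //.
- move=> i iA; have im := Iact_ineq iA.
  by rewrite mxE /a /b iA (negbTE (notS i im)) addr0; case: (lsign i im).
- move=> i; rewrite inE negb_or => /andP[iA iS].
  by rewrite mxE /a /b (negbTE iA) (negbTE iS) addr0.
have ineq_part : \sum_(i : 'I_N | (i < m1)%N) l 0 i *: dG i w = \sum_i a i *: dG i w.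
  rewrite [RHS](bigID (fun i : 'I_N => (i < m1)%N)) /= [X in _ + X]big1 ?addr0.
    apply: eq_bigr => i im; rewrite /a; case: ifPn => // iA.
    have [_] := lsign i im; rewrite !mxE => /eqP.
    by rewrite mulf_eq0 (lt_eqF (inactive i im iA)) orbF => /eqP ->.
  move=> i mi; rewrite /a; case: ifPn => [/Iact_ineq im|_]; last by rewrite scale0r.
  by rewrite im in mi.
have eq_part : \sum_(j : 'I_N | ~~ (j < m1)%N) l 0 j *: dG j w = \sum_i b i *: dG i w.
  rewrite [RHS](sum_supported (T := S)); last by move=> i iS; rewrite /b (negbTE iS).
  rewrite [RHS](eq_bigr (fun i => \sum_(j : 'I_N | (m1 <= j)%N) (l 0 j * c j i) *: dG i w)).
    rewrite exchange_big /=; apply: congr_big => // j; first by rewrite -leqNgt.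
    rewrite -leqNgt => jm; rewrite hc // scaler_sumr.
    by apply: eq_bigr => i _; rewrite scalerA.
  by move=> i iS; rewrite /b iS scaler_suml.
rewrite ueq (bigID (fun i : 'I_N => (i < m1)%N)) /= ineq_part eq_part -big_split /=.
by congr (_ + _); apply: eq_bigr => i _; rewrite mxE scalerDl.
Qed.

End MultiplierReduction.

Lemma inactive_eventually (R : realType) (n m1 m2 : nat)
    (G : 'rV[R]_n -> 'rV[R]_(m1 + m2)) (wbar : 'rV[R]_n) (Iact : {set 'I_(m1 + m2)})
    (w : nat -> 'rV[R]_n) (z : nat -> 'rV[R]_(m1 + m2)) :
  (forall i, {for wbar, continuous (fun x => G x 0 i)}) -> C_set (G wbar) ->
  (forall i : 'I_(m1 + m2), (i < m1)%N -> G wbar 0 i = 0 -> i \in Iact) ->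
  w @ \oo --> wbar -> z @ \oo --> (0 : 'rV[R]_(m1 + m2)) ->
  \forall k \near \oo, forall i : 'I_(m1 + m2),
    (i < m1)%N -> i \notin Iact -> G (w k) 0 i - z k 0 i < 0.
Proof.
move=> G_cont C_wbar active hw hz; apply: filter_forall => i.
have [/andP[im iA]|skip] := boolP ((i < m1)%N && (i \notin Iact)); last first.
  by apply: nearW => k im iA; move: skip; rewrite im iA.
have G_neg : G wbar 0 i < 0.
  have := C_wbar i; rewrite im le_eqVlt => /orP[/eqP Gi0|//].
  by move: iA; rewrite active.
have lim : (fun k => G (w k) 0 i - z k 0 i) @ \oo --> G wbar 0 i - 0.
  apply: cvgB; first by have := cvg_comp _ _ hw (G_cont i).
  by have := cvg_coord (i := 0) (j := i) hz; rewrite mxE.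
rewrite subr0 in lim; near=> k => _ _; near: k.
exact: (cvgr_lt _ lim _ G_neg).
Unshelve. all: by end_near.
Qed.

Lemma eventual_representations (R : realType) (n m1 m2 : nat) (D : set 'rV[R]_n)
    (G : 'rV[R]_n -> 'rV[R]_(m1 + m2)) (dG : 'I_(m1 + m2) -> 'rV[R]_n -> 'rV[R]_n)
    (wbar : 'rV[R]_n) (S : {set 'I_(m1 + m2)})
    (w : nat -> 'rV[R]_n) (z : nat -> 'rV[R]_(m1 + m2)) :
  let J := finset (fun i : 'I_(m1 + m2) => (m1 <= i)%N) in
  let Iact := finset (fun i : 'I_(m1 + m2) => (i < m1)%N && (G wbar 0 i == 0)) in
  (forall i, continuous (dG i)) -> (forall i, {for wbar, continuous (fun x => G x 0 i)}) ->
  C_set (G wbar) -> basis_of_span S J (dG^~ wbar) ->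
  (\forall x \near wbar, fam_rank J (dG^~ x) = fam_rank J (dG^~ wbar)) ->
  w @ \oo --> wbar -> z @ \oo --> (0 : 'rV[R]_(m1 + m2)) ->
  \forall k \near \oo, lin_indep_on S (dG^~ (w k)) /\
    forall u, M_map (@C_set R m1 m2) D G dG (w k) (z k) u ->
      exists I lam eta, mult_rep (dG^~ (w k)) D (w k) u S Iact I lam eta.
Proof.
move=> J Iact dG_cont G_cont C_wbar basis rank_near hw hz.
have [SJ [indS _]] := basis.
have S_eq i : i \in S -> (m1 <= i)%N by move/(fintype.subsetP SJ); rewrite inE.
have Iact_ineq i : i \in Iact -> (i < m1)%N by rewrite inE => /andP[].
have active_Iact (i : 'I_(m1 + m2)) : (i < m1)%N -> G wbar 0 i = 0 -> i \in Iact.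
  by move=> im Gi; rewrite inE im Gi eqxx.
have indep_near := lin_indep_eventually dG_cont hw indS.
have rank_near' : \forall k \near \oo,
    fam_rank J (dG^~ (w k)) = fam_rank J (dG^~ wbar) := hw _ rank_near.
have inactive_near := inactive_eventually G_cont C_wbar active_Iact hw hz.
near=> k; have indk : lin_indep_on S (dG^~ (w k)) by near: k.
split => // u; apply: (reduce_multipliers S_eq Iact_ineq); last by near: k.
by move=> j jm; apply: (constant_rank_basis basis indk); [near: k | rewrite inE].
Unshelve. all: by end_near.
Qed.

Unset Implicit Arguments.

Theorem mainTheorem1 (R : realType) (n m1 m2 : nat)
  (D : set 'rV[R]_n) (G : 'rV[R]_n -> 'rV[R]_(m1 + m2))
  (dG : 'I_(m1 + m2) -> 'rV[R]_n -> 'rV[R]_n) (wbar : 'rV[R]_n) :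
  D !=set0 -> closed D ->
  C1_with_gradients G dG ->
  @C_set R m1 m2 (G wbar) -> D wbar ->
  RCPLD D G dG wbar ->
  AM_regular (@C_set R m1 m2) D G dG wbar.
Proof.
move=> _ _ C1 C_wbar D_wbar [rank_near [S [basis stable]]].
move=> v [w [z [u [hw [hz [hu uM]]]]]].
have dG_cont i : continuous (dG i) by case: (C1 i).
have G_cont i : {for wbar, continuous (fun x => G x 0 i)}.
  by apply: differentiable_continuous; case: (C1 i) => /(_ wbar) [].
have [SJ _] := basis.
have S_eq i : i \in S -> (m1 <= i)%N by move/(fintype.subsetP SJ); rewrite inE.
have [K _ goodK] := eventual_representations D dG_cont G_cont C_wbar basis rank_near hw hz.
apply: (rcpld_limit dG_cont D_wbar C_wbar S_eq _ stable
  (w := fun k => w (k + K)%N) (u := fun k => u (k + K)%N)).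
- by move=> i; rewrite inE => /andP[-> /eqP].
- exact: cvg_comp (cvg_addnr K) hw.
- exact: cvg_comp (cvg_addnr K) hu.
- by move=> k; case: (goodK (k + K)%N (leq_addl _ _)).
- by move=> k; case: (goodK (k + K)%N (leq_addl _ _)) => _; apply; apply: uM.
Qed.
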